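(* For all sufficiently large $n\in\mathbb{N}$ there exists a graph $G$ on $n^{3/2}/(10^6\log n)$ vertices such that (i) every vertex of $G$ has degree at most $3n/(2\cdot 10^3)$; (ii) $G$ contains no clique on $10$ vertices; (iii) $G$ has no independent set of size $\sqrt{n}/50$.
   Context: Here $\log$ denotes the natural logarithm, and vertex counts are understood up to rounding to integers. *)

From mathcomp Require Import all_boot.
From Stdlib Require Import Reals.

Set Implicit Arguments.
Unset Strict Implicit.
Unset Printing Implicit Defensive.

Definition simple_graph (T : finType) (e : rel T) : Prop :=
  (forall x y, e x y = e y x) /\ (forall x, ~~ e x x).

Definition degree (T : finType) (e : rel T) (v : T) : nat := #|[set w | e v w]|.

Definition is_clique (T : finType) (e : rel T) (A : {set T}) : Prop :=
  forall x y, x \in A -> y \in A -> x != y -> e x y.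

Definition is_independent (T : finType) (e : rel T) (A : {set T}) : Prop :=
  forall x y, x \in A -> y \in A -> ~~ e x y.

(* Take the binomial random graph G(m, p) with p = 300 ln n / sqrt n. By the
   first-moment method it suffices that the expected numbers of 10-cliques, of
   vertices with k > 3n/2000 neighbours and of independent sets of size
   s ~ sqrt n / 50 add up to less than 1. These expectations are at most
   m^10 p^45, m (e m p / k)^k and m^s (1 - p)^(s(s-1)/2), and m p <= 3n/10^4.
   Hence the first is at most n^10 p^35 = O(n^(-13/2)) (as (ln n)^35 <= 35^35 n),
   the second at most n^(3/2) (3/5)^k, and the third at most
   exp(s (3/2 ln n - p (s-1)/2)) <= 1/n because p (s-1) >= 5 ln n. *)

From mathcomp Require Import all_boot all_order all_algebra.
From mathcomp Require Import Rstruct.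
From Stdlib Require Import Reals Lra Lia.

Set Implicit Arguments.
Unset Strict Implicit.
Unset Printing Implicit Defensive.

Import Order.TTheory GRing.Theory Num.Theory.

Lemma exists_subset_card (T : finType) (A : {set T}) k :
  (k <= #|A|)%nat -> exists2 B : {set T}, B \subset A & #|B| = k.
Proof.
move=> kA; have : (0 < #|[set B : {set T} | B \subset A & #|B| == k]|)%nat.
  by rewrite cards_draws bin_gt0.
by case/card_gt0P => B; rewrite inE => /andP [sBA /eqP cB]; exists B.
Qed.

Section SumTerm.
Local Open Scope ring_scope.

Lemma ler_sum_term (R : numDomainType) (J : finType) (P : pred J) (F : J -> R) j :
  P j -> (forall i, P i -> 0 <= F i) -> F j <= \sum_(i | P i) F i.
Proof.
move=> Pj F_ge0; rewrite (bigD1 j) //= lerDl.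
by apply: sumr_ge0 => i /andP [Pi _]; apply: F_ge0.
Qed.

End SumTerm.

Section ProductMeasure.
Local Open Scope ring_scope.
Variables (R : realFieldType) (I : finType) (p : R).

Definition bernoulli (b : bool) : R := if b then p else 1 - p.

Definition weight (f : {ffun I -> bool}) : R := \prod_i bernoulli (f i).

Definition expect (X : {ffun I -> bool} -> R) : R := \sum_f weight f * X f.

Definition all_eq (K : {set I}) (b : bool) (f : {ffun I -> bool}) : bool :=
  [forall i in K, f i == b].

Lemma natr_all_eq (K : {set I}) b f :
  (all_eq K b f)%:R = \prod_(i in K) (f i == b)%:R :> R.
Proof.
rewrite /all_eq -big_andE.
by apply: (big_morph (fun c : bool => c%:R : R)) => [c d|]; rewrite -?natrM ?mulnb.
Qed.

Lemma expect_all_eq (K : {set I}) b :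
  expect (fun f => (all_eq K b f)%:R) = bernoulli b ^+ #|K|.
Proof.
pose F i (c : bool) := bernoulli c * (if i \in K then (c == b)%:R else 1).
transitivity (\sum_(f : {ffun I -> bool}) \prod_i F i (f i)).
  by apply: eq_bigr => f _; rewrite natr_all_eq big_mkcond -big_split.
rewrite -(bigA_distr_bigA F) -prodr_const [RHS]big_mkcond /=.
apply: eq_bigr => i _; rewrite big_bool /F /bernoulli /=.
by case: (i \in K); case: b {F}; rewrite ?mulr1 ?mulr0 ?addr0 ?add0r // addrC subrK.
Qed.

Lemma expect_sum (J : finType) (P : pred J) (X : J -> {ffun I -> bool} -> R) :
  expect (fun f => \sum_(j | P j) X j f) = \sum_(j | P j) expect (X j).
Proof. by rewrite /expect exchange_big; apply: eq_bigr => f _; rewrite mulr_sumr. Qed.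

Lemma expectD X Y : expect (fun f => X f + Y f) = expect X + expect Y.
Proof. by rewrite /expect -big_split; apply: eq_bigr => f _; rewrite mulrDr. Qed.

Hypothesis p01 : 0 <= p <= 1.

Lemma weight_ge0 f : 0 <= weight f.
Proof.
case/andP: p01 => p0 p1; apply: prodr_ge0 => i _; rewrite /bernoulli.
by case: (f i); rewrite ?subr_ge0.
Qed.

Lemma sum_weight : \sum_f weight f = 1.
Proof.
rewrite -(bigA_distr_bigA (fun i (c : bool) => bernoulli c)) big1 // => i _.
by rewrite big_bool /bernoulli /= addrC subrK.
Qed.

Lemma exists_lt_of_expect_lt X c : expect X < c -> exists f, X f < c.
Proof.
move=> EXc; apply/existsP; apply: contraLR EXc => /existsPn Xc.
rewrite -leNgt -[c]mul1r -sum_weight mulr_suml; apply: ler_sum => f _.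
by rewrite ler_wpM2l ?weight_ge0 // leNgt Xc.
Qed.

End ProductMeasure.

Section RandomGraph.
Local Open Scope ring_scope.
Variables (R : realFieldType) (m : nat) (p : R).

Notation vertex := 'I_m.
Notation slot := {set 'I_m}.
Notation outcome := {ffun slot -> bool}.

(* Coins sit on all subsets of vertices; [graph_of] only reads those on 2-sets. *)

Definition pairs (A : {set vertex}) : {set slot} := [set B : slot | B \subset A & #|B| == 2].

Definition star (v : vertex) (S : {set vertex}) : {set slot} := [set [set v; w] | w in S].

Definition graph_of (f : outcome) : rel vertex := fun i j => (i != j) && f [set i; j].

Lemma graph_of_simple f : simple_graph (graph_of f).
Proof. by split=> [i j|i]; rewrite /graph_of ?eqxx // eq_sym setUC. Qed.

Lemma card_star v S : #|star v S| = #|S|.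
Proof.
rewrite card_imset // => w w' vw_vw'.
have : w \in [set v; w'] by rewrite -vw_vw' !inE eqxx orbT.
rewrite !inE => /orP [/eqP wv|/eqP //].
have : w' \in [set v; w] by rewrite vw_vw' !inE eqxx orbT.
by rewrite wv !inE orbb => /eqP ->.
Qed.

Lemma all_eq_pairs (A : {set vertex}) b f :
  (forall x y, x \in A -> y \in A -> x != y -> graph_of f x y = b) ->
  all_eq (pairs A) b f.
Proof.
move=> hA; apply/forall_inP => B; rewrite inE => /andP [sBA /cards2P [x [y [xy B_xy]]]].
subst B; have xA : x \in A by apply: (subsetP sBA); rewrite !inE eqxx.
have yA : y \in A by apply: (subsetP sBA); rewrite !inE eqxx orbT.
by have := hA x y xA yA xy; rewrite /graph_of xy => /= ->.
Qed.

Definition clique_count (c : nat) (f : outcome) : R :=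
  \sum_(A : {set vertex} | #|A| == c) (all_eq (pairs A) true f)%:R.

Definition star_count (k : nat) (f : outcome) : R :=
  \sum_(v : vertex) \sum_(S : {set vertex} | #|S| == k) (all_eq (star v S) true f)%:R.

Definition independent_count (s : nat) (f : outcome) : R :=
  \sum_(A : {set vertex} | #|A| == s) (all_eq (pairs A) false f)%:R.

Lemma sum_card_const j (a : R) : \sum_(A : {set vertex} | #|A| == j) a = 'C(m, j)%:R * a.
Proof.
rewrite sumr_const mulr_natl -[in RHS](card_ord m) -(card_draws _ j).
by congr (_ *+ _); apply: eq_card => A; rewrite !inE.
Qed.

Lemma expect_clique_count c : expect p (clique_count c) = 'C(m, c)%:R * p ^+ 'C(c, 2).
Proof.
rewrite expect_sum -sum_card_const; apply: eq_bigr => A /eqP cA.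
by rewrite expect_all_eq cards_draws cA.
Qed.

Lemma expect_star_count k : expect p (star_count k) = m%:R * ('C(m, k)%:R * p ^+ k).
Proof.
rewrite expect_sum (eq_bigr (fun _ => 'C(m, k)%:R * p ^+ k)) => [|v _].
  by rewrite sumr_const card_ord [RHS]mulr_natl.
rewrite expect_sum -sum_card_const; apply: eq_bigr => S /eqP cS.
by rewrite expect_all_eq card_star cS.
Qed.

Lemma expect_independent_count s :
  expect p (independent_count s) = 'C(m, s)%:R * (1 - p) ^+ 'C(s, 2).
Proof.
rewrite expect_sum -sum_card_const; apply: eq_bigr => A /eqP cA.
by rewrite expect_all_eq cards_draws cA.
Qed.

Lemma clique_count_ge1 c f (A : {set vertex}) :
  #|A| = c -> is_clique (graph_of f) A -> 1 <= clique_count c f.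
Proof.
move=> cA clA; have := @all_eq_pairs A true f clA => /= clA'.
rewrite -[1]/(true%:R) -clA'.
by apply: (ler_sum_term (F := fun B => (all_eq (pairs B) true f)%:R)); rewrite ?cA.
Qed.

Lemma independent_count_ge1 (s : nat) f (A : {set vertex}) :
  (s <= #|A|)%nat -> is_independent (graph_of f) A -> 1 <= independent_count s f.
Proof.
move=> sA indA; have [B sBA cB] := exists_subset_card sA.
have indB : all_eq (pairs B) false f.
  by apply: all_eq_pairs => x y xB yB _; apply/negbTE/indA; apply: (subsetP sBA).
rewrite -[1]/(true%:R) -indB.
by apply: (ler_sum_term (F := fun C => (all_eq (pairs C) false f)%:R)); rewrite ?cB.
Qed.

Lemma star_count_ge1 (k : nat) f v : (k <= degree (graph_of f) v)%nat -> 1 <= star_count k f.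
Proof.
move=> kdeg; have [S sSN cS] := exists_subset_card kdeg.
have starS : all_eq (star v S) true f.
  apply/forall_inP => B /imsetP [w wS ->].
  by have := subsetP sSN w wS; rewrite inE => /andP [_ ->].
rewrite -[1]/(true%:R) -starS.
apply: le_trans (ler_sum_term (P := xpredT) (j := v) _ _) => [|//|u _]; last first.
  exact: sumr_ge0.
by apply: (ler_sum_term (F := fun S' => (all_eq (star v S') true f)%:R)); rewrite ?cS.
Qed.

Theorem random_graph_exists c k s : 0 <= p <= 1 ->
  'C(m, c)%:R * p ^+ 'C(c, 2) + m%:R * ('C(m, k)%:R * p ^+ k)
    + 'C(m, s)%:R * (1 - p) ^+ 'C(s, 2) < 1 ->
  exists e : rel vertex, [/\ simple_graph e, forall v, (degree e v < k)%nat,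
    forall A : {set vertex}, #|A| = c -> ~ is_clique e A
  & forall A : {set vertex}, is_independent e A -> (#|A| < s)%nat].
Proof.
move=> p01; rewrite -expect_clique_count -expect_star_count -expect_independent_count.
rewrite -!expectD => /(exists_lt_of_expect_lt p01) [f bad_lt1].
have cl0 : 0 <= clique_count c f by apply: sumr_ge0.
have st0 : 0 <= star_count k f by apply: sumr_ge0 => v _; apply: sumr_ge0.
have in0 : 0 <= independent_count s f by apply: sumr_ge0.
exists (graph_of f); split=> [|v|A cA clA|A indA]; first exact: graph_of_simple.
- rewrite ltnNge; apply/negP => /star_count_ge1 st1.
  by move: bad_lt1; rewrite ltNge (le_trans st1) // -addrA addrCA lerDl addr_ge0.
- move: bad_lt1; rewrite ltNge (le_trans (clique_count_ge1 cA clA)) //.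
  by rewrite -addrA lerDl addr_ge0.
- rewrite ltnNge; apply/negP => /independent_count_ge1 /(_ indA) in1.
  by move: bad_lt1; rewrite ltNge (le_trans in1) // lerDr addr_ge0.
Qed.

End RandomGraph.

Lemma ffact_le_expn n j : (n ^_ j <= expn n j)%nat.
Proof.
elim: j => [|j IH] //; rewrite ffactnSr expnSr.
by apply: leq_mul => //; apply: leq_subr.
Qed.

Section RealInequalities.
Local Open Scope R_scope.

Lemma exp_le_exp a b : a <= b -> exp a <= exp b.
Proof. by case=> [/exp_increasing/Rlt_le | ->] //; apply: Rle_refl. Qed.

Lemma exp_pow z j : exp z ^ j = exp (z * INR j).
Proof.
elim: j => [|j IH]; first by rewrite Rmult_0_r exp_0.
by rewrite S_INR /= IH -exp_plus; congr exp; ring.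
Qed.

Lemma sqrt_exp z : sqrt (exp z) = exp (z / 2).
Proof.
have -> : exp z = exp (z / 2) * exp (z / 2) by rewrite -exp_plus; congr exp; field.
exact/sqrt_square/Rlt_le/exp_pos.
Qed.

Lemma pow_le_exp z j : 0 <= z -> z ^ j <= INR j ^ j * exp z.
Proof.
case: j => [|j] z0; first by have := exp_ineq1_le z; rewrite /=; lra.
set k := INR j.+1; have k0 : 0 < k by apply: lt_0_INR; lia.
have zk : 0 <= z / k <= exp (z / k).
  split; first by apply: Rmult_le_pos z0 (Rlt_le _ _ (Rinv_0_lt_compat _ k0)).
  by have := exp_ineq1_le (z / k); lra.
have -> : z ^ j.+1 = k ^ j.+1 * (z / k) ^ j.+1.
  by rewrite -Rpow_mult_distr; congr (_ ^ _); field; lra.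
apply/Rmult_le_compat_l/(Rle_trans _ _ _ (pow_incr _ _ _ zk)); first exact/pow_le/Rlt_le.
by rewrite exp_pow -/k; apply: exp_le_exp; apply: Req_le; field; lra.
Qed.

Lemma INR_expn n j : INR (expn n j) = INR n ^ j.
Proof. by elim: j => [|j IH] //; rewrite expnS -multE mult_INR IH. Qed.

Lemma INR_bin_fact_le m j : INR 'C(m, j) * INR j`! <= INR m ^ j.
Proof.
rewrite -mult_INR -INR_expn; apply: le_INR; apply/ssrnat.leP.
by rewrite multE bin_ffact ffact_le_expn.
Qed.

Lemma INR_bin_le_pow m j : INR 'C(m, j) <= INR m ^ j.
Proof.
have := INR_bin_fact_le m j; have := pos_INR 'C(m, j).
have : 1 <= INR j`! by apply: (le_INR 1); apply/ssrnat.leP; apply: fact_gt0.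
nra.
Qed.

Lemma double_INR_bin2 s : 2 * INR 'C(s, 2) = INR s * (INR s - 1).
Proof.
case: s => [|s]; first by rewrite /=; ring.
have -> : 2 = INR 2`! by [].
rewrite Rmult_comm -mult_INR multE bin_ffact ffactnS ffactn1 -multE mult_INR S_INR.
by rewrite /=; ring.
Qed.

Lemma succ_pow_le k : INR k.+1 ^ k <= exp 1 * INR k ^ k.
Proof.
case: k => [|k]; first by have := exp_ineq1_le 1; rewrite /=; lra.
set a := INR k.+1; have a0 : 0 < a by apply: lt_0_INR; lia.
have -> : INR k.+2 = a * (1 + / a) by rewrite S_INR -/a; field; lra.
rewrite Rpow_mult_distr (Rmult_comm (exp 1)); apply: Rmult_le_compat_l; first exact/pow_le/Rlt_le.
have -> : exp 1 = exp (/ a) ^ k.+1 by rewrite exp_pow -/a; congr exp; field; lra.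
apply: pow_incr; have := exp_ineq1_le (/ a); have := Rinv_0_lt_compat _ a0; lra.
Qed.

Lemma pow_self_le_exp_fact k : INR k ^ k <= exp (INR k) * INR k`!.
Proof.
elim: k => [|k IH]; first by rewrite /= exp_0; lra.
rewrite factS -multE mult_INR S_INR exp_plus -S_INR.
set a := INR k.+1; have a0 : 0 <= a by apply: pos_INR.
apply: (Rle_trans _ (a * (exp 1 * INR k ^ k))).
  by apply: Rmult_le_compat_l a0 (succ_pow_le k).
have -> : exp (INR k) * exp 1 * (a * INR k`!) = a * (exp 1 * (exp (INR k) * INR k`!)) by ring.
apply/Rmult_le_compat_l/Rmult_le_compat_l => //; exact/Rlt_le/exp_pos.
Qed.

Lemma INR_bin_le_exp1_ratio m k : INR 'C(m, k) <= (exp 1 * INR m / INR k) ^ k.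
Proof.
case: k => [|k]; first by rewrite bin0 /=; lra.
set a := INR k.+1; have a0 : 0 < a by apply: lt_0_INR; lia.
have ak : 0 < a ^ k.+1 by apply: pow_lt.
rewrite /Rdiv !Rpow_mult_distr pow_inv exp_pow Rmult_1_l -/a.
apply: (Rmult_le_reg_r (a ^ k.+1)) => //.
rewrite Rmult_assoc Rinv_l ?Rmult_1_r; last lra.
have := pow_self_le_exp_fact k.+1; have := INR_bin_fact_le m k.+1; rewrite -/a.
have := pos_INR 'C(m, k.+1); have := exp_pos a.
nra.
Qed.

Lemma exp_third_le : exp (1 / 3) <= 5 / 3.
Proof.
have e3 : exp (1 / 3) ^ 3 = exp 1 by rewrite exp_pow; congr exp; simpl; field.
have := exp_le_3; have := exp_pos (1 / 3); rewrite /= in e3.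
nra.
Qed.

End RealInequalities.

Definition edge_prob (x : R) : R := (300 * ln x / sqrt x)%R.

Section Estimates.
Local Open Scope R_scope.
Variables (x : R) (m : nat).
Hypothesis sqrt_x_large : 4 * 10500 ^ 35 <= sqrt x.
Hypothesis m_le : INR m <= x * sqrt x / (10 ^ 6 * ln x).

Let r := sqrt x.
Let L := ln x.
Let p := edge_prob x.

Lemma sqrt_x_ge : 10 ^ 9 <= r.
Proof.
apply: Rle_trans sqrt_x_large; have : 10500 ^ 3 <= 10500 ^ 35 by apply: Rle_pow; [lra | lia].
have : 10 ^ 9 <= 10500 ^ 3 by simpl; lra.
lra.
Qed.

Lemma x_eq_sq : x = r * r.
Proof.
rewrite sqrt_sqrt //; apply: Rnot_lt_le => /Rlt_le/sqrt_neg_0.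
by have := sqrt_x_ge; rewrite /r; lra.
Qed.

Lemma x_gt0 : 0 < x.
Proof. by rewrite x_eq_sq; have := sqrt_x_ge; nra. Qed.

Lemma x_eq_exp : x = exp L.
Proof. by rewrite exp_ln //; apply: x_gt0. Qed.

Lemma sqrt_x_eq_exp : r = exp (L / 2).
Proof. by rewrite /r {1}x_eq_exp sqrt_exp. Qed.

Lemma ln_x_ge1 : 1 <= L.
Proof.
apply: Rnot_lt_le => /exp_increasing; rewrite -x_eq_exp x_eq_sq.
by have := sqrt_x_ge; have := exp_le_3; nra.
Qed.

Lemma ln_x_pow_le j : L ^ j <= INR j ^ j * x.
Proof. by rewrite {1}x_eq_exp; apply: pow_le_exp; have := ln_x_ge1; lra. Qed.

Lemma edge_prob_ge0 : 0 <= p.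
Proof.
rewrite /p /edge_prob -/L -/r; have := ln_x_ge1; have := sqrt_x_ge => *.
by apply: Rmult_le_pos; [lra | apply/Rlt_le/Rinv_0_lt_compat; lra].
Qed.

Lemma edge_prob_le1 : p <= 1.
Proof.
pose u := exp (L / 4); have u0 : 0 < u by apply: exp_pos.
have r_uu : r = u * u by rewrite sqrt_x_eq_exp -exp_plus; congr exp; field.
have L_u : L <= 4 * u by have := exp_ineq1_le (L / 4); rewrite -/u; lra.
have := sqrt_x_ge; rewrite r_uu => r_ge.
rewrite /p /edge_prob -/L -/r r_uu; apply: (Rmult_le_reg_r (u * u)); first nra.
by rewrite /Rdiv Rmult_assoc Rinv_l; nra.
Qed.

Lemma m_le_x_sqrt : INR m <= x * r.
Proof.
apply: Rle_trans m_le _; rewrite -/r -/L.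
have := ln_x_ge1; have := sqrt_x_ge; have := x_gt0 => *.
have xr0 : 0 <= x * r by apply: Rmult_le_pos; lra.
apply: (Rmult_le_reg_r (10 ^ 6 * L)); first lra.
rewrite /Rdiv Rmult_assoc Rinv_l ?Rmult_1_r; last lra.
by rewrite -{1}(Rmult_1_r (x * r)); apply: Rmult_le_compat_l xr0 _; lra.
Qed.

Lemma m_edge_prob_le : INR m * p <= 3 * x / 10 ^ 4.
Proof.
have := ln_x_ge1; have := sqrt_x_ge => *.
apply: Rle_trans (Rmult_le_compat_r _ _ _ edge_prob_ge0 m_le) _.
by rewrite /p /edge_prob -/r -/L; apply: Req_le; field; lra.
Qed.

Lemma clique_term_le : INR 'C(m, 10) * p ^ 'C(10, 2) <= 1 / 4.
Proof.
have r_ge := sqrt_x_ge; have L_ge := ln_x_ge1; have x_sq := x_eq_sq; have x0 := x_gt0.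
have p0 := edge_prob_ge0; have m0 := pos_INR m.
have mp_le : INR m * p <= x by have := m_edge_prob_le; have := x_gt0; lra.
have pr : p * r = 300 * L by rewrite /p /edge_prob -/r -/L; field; lra.
set t := x ^ 10 * p ^ 35.
have t0 : 0 <= t by apply: Rmult_le_pos; apply: pow_le; lra.
have term_le_t : INR 'C(m, 10) * p ^ 45 <= t.
  apply: Rle_trans (Rmult_le_compat_r _ _ _ (pow_le _ 45 p0) (INR_bin_le_pow m 10)) _.
  have -> : INR m ^ 10 * p ^ 45 = (INR m * p) ^ 10 * p ^ 35 by ring.
  by apply: Rmult_le_compat_r (pow_le _ _ p0) _; apply: pow_incr; nra.
have t_r35 : t * r ^ 35 <= 10500 ^ 35 * x ^ 11.
  have -> : t * r ^ 35 = x ^ 10 * (300 ^ 35 * L ^ 35).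
    by rewrite /t -Rpow_mult_distr -pr; ring.
  have := ln_x_pow_le 35; have -> : INR 35 = 35 by rewrite /=; ring.
  have : 0 <= x ^ 10 * 300 ^ 35 by apply: Rmult_le_pos; apply: pow_le; lra.
  have -> : 10500 ^ 35 * x ^ 11 = x ^ 10 * 300 ^ 35 * (35 ^ 35 * x).
    have -> : 10500 = 300 * 35 by lra.
    by rewrite Rpow_mult_distr; ring.
  nra.
have t_r13 : t * r ^ 13 <= 10500 ^ 35.
  have r22 : 0 < r ^ 22 by apply: pow_lt; lra.
  apply: (Rmult_le_reg_r _ _ _ r22); rewrite Rmult_assoc -pow_add.
  by have -> : 10500 ^ 35 * r ^ 22 = 10500 ^ 35 * x ^ 11 by rewrite x_sq; ring.
have r13 : r <= r ^ 13 by rewrite -{1}(pow_1 r); apply: Rle_pow; [lra | lia].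
rewrite [X in p ^ X]/=; apply: Rle_trans term_le_t _.
have := sqrt_x_large; rewrite -/r => r_large.
have : 0 < 10500 ^ 35 by apply: pow_lt; lra.
nra.
Qed.

Lemma degree_term_le k : 3 * x / 2000 < INR k -> INR m * (INR 'C(m, k) * p ^ k) <= 1 / 4.
Proof.
move=> k_gt; have r_ge := sqrt_x_ge; have x_sq := x_eq_sq; have x0 := x_gt0.
have p0 := edge_prob_ge0; have m0 := pos_INR m.
have k0 : 0 < INR k by lra.
have ratio0 : 0 <= exp 1 * INR m * p / INR k.
  apply/Rmult_le_pos/Rlt_le/Rinv_0_lt_compat => //.
  by apply/Rmult_le_pos/p0/Rmult_le_pos/m0/Rlt_le/exp_pos.
have ratio_le : exp 1 * INR m * p / INR k <= exp (- (1 / 3)).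
  have := m_edge_prob_le; have := exp_le_3; have := exp_pos 1 => *.
  apply: (Rle_trans _ (3 / 5)).
    apply: (Rmult_le_reg_r (INR k)) => //.
    by rewrite /Rdiv Rmult_assoc Rinv_l; nra.
  rewrite exp_Ropp; have := exp_third_le; have := exp_pos (1 / 3) => *.
  apply: (Rmult_le_reg_r (exp (1 / 3))) => //.
  by rewrite Rinv_l; lra.
have binom_le : INR 'C(m, k) * p ^ k <= exp (- (x / 2000)).
  apply: Rle_trans (Rmult_le_compat_r _ _ _ (pow_le _ k p0) (INR_bin_le_exp1_ratio m k)) _.
  rewrite -Rpow_mult_distr; apply: Rle_trans (pow_incr _ _ k (conj _ _)) _.
  - by rewrite /Rdiv Rmult_assoc (Rmult_comm (/ INR k)) -Rmult_assoc; exact: ratio0.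
  - by rewrite /Rdiv Rmult_assoc (Rmult_comm (/ INR k)) -Rmult_assoc; exact: ratio_le.
  by rewrite exp_pow; apply: exp_le_exp; lra.
have exp_large : 4 * (x * r) <= exp (x / 2000).
  have := @pow_le_exp (x / 2000) 2 ltac:(lra); have -> : INR 2 ^ 2 = 4 by rewrite /=; ring.
  rewrite x_sq /=; nra.
apply: Rle_trans (Rmult_le_compat _ _ _ _ m0 _ m_le_x_sqrt binom_le) _.
- by apply: Rmult_le_pos; [apply: pos_INR | apply: pow_le].
rewrite exp_Ropp; have := exp_pos (x / 2000) => e0.
apply: (Rmult_le_reg_r (exp (x / 2000))) => //.
by rewrite Rmult_assoc Rinv_l; lra.
Qed.

Lemma independent_term_le s :
  r / 50 - 1 < INR s -> INR 'C(m, s) * (1 - p) ^ 'C(s, 2) <= 1 / 4.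
Proof.
move=> s_gt; have r_ge := sqrt_x_ge; have L_ge := ln_x_ge1.
have p0 := edge_prob_ge0; have p1 := edge_prob_le1.
have xr_exp : x * r = exp (3 / 2 * L).
  by rewrite sqrt_x_eq_exp {1}x_eq_exp -exp_plus; congr exp; field.
have binom_le : INR 'C(m, s) <= exp (3 / 2 * L * INR s).
  apply: Rle_trans (INR_bin_le_pow m s) _; rewrite -exp_pow -xr_exp.
  by apply: pow_incr; split; [apply: pos_INR | apply: m_le_x_sqrt].
have nonedge_le : (1 - p) ^ 'C(s, 2) <= exp (- p * INR 'C(s, 2)).
  rewrite -exp_pow; apply: pow_incr; have := exp_ineq1_le (- p); lra.
have exponent_le : 3 / 2 * L * INR s + - p * INR 'C(s, 2) <= - L.
  have ps : 5 * L <= p * (INR s - 1).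
    have pr : p * r = 300 * L by rewrite /p /edge_prob -/r -/L; field; lra.
    apply: (Rmult_le_reg_r r); first lra.
    have -> : p * (INR s - 1) * r = p * r * (INR s - 1) by ring.
    by rewrite pr; nra.
  have := double_INR_bin2 s; nra.
apply: Rle_trans (Rmult_le_compat _ _ _ _ (pos_INR _) (pow_le _ _ _) binom_le nonedge_le) _.
  lra.
rewrite -exp_plus; apply: Rle_trans (exp_le_exp exponent_le) _.
rewrite exp_Ropp -x_eq_exp x_eq_sq; apply: (Rmult_le_reg_r (r * r)); first nra.
by rewrite Rinv_l; nra.
Qed.

Lemma expected_bad_lt1 k s : 3 * x / 2000 < INR k -> r / 50 - 1 < INR s ->
  INR 'C(m, 10) * p ^ 'C(10, 2) + INR m * (INR 'C(m, k) * p ^ k)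
    + INR 'C(m, s) * (1 - p) ^ 'C(s, 2) < 1.
Proof.
move=> k_gt s_gt; have := clique_term_le; have := degree_term_le k_gt.
have := independent_term_le s_gt; lra.
Qed.

End Estimates.

Lemma exists_nat_between (y : R) : (0 <= y)%R -> exists k : nat, (y < INR k <= y + 1)%R.
Proof.
move=> y0; have [up_gt up_le] := archimed y.
have up0 : (0 <= up y)%Z by apply: le_IZR; lra.
by exists (Z.to_nat (up y)); rewrite INR_IZR_INZ Znat.Z2Nat.id //; lra.
Qed.

Theorem lemma2p1 :
  exists N : nat, forall n : nat, (N <= n)%nat ->
    forall m : nat,
      (INR m <= INR n * sqrt (INR n) / (10 ^ 6 * ln (INR n)) < INR m + 1)%R ->
      exists e : rel 'I_m,
        simple_graph e /\
        (forall v : 'I_m, (INR (degree e v) <= 3 * INR n / (2 * 10 ^ 3))%R) /\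
        (forall A : {set 'I_m}, #|A| = 10 -> ~ is_clique e A) /\
        (forall A : {set 'I_m}, is_independent e A -> (INR #|A| < sqrt (INR n) / 50)%R).
Proof.
have c0 : (0 <= 4 * 10500 ^ 35)%R by apply: Rmult_le_pos; [lra | apply: pow_le; lra].
have [N [N_gt _]] := exists_nat_between (pow2_ge_0 (4 * 10500 ^ 35)).
exists N => n /ssrnat.leP/le_INR le_Nn m [m_le _]; set x := INR n in le_Nn m_le *.
have x_large : (4 * 10500 ^ 35 <= sqrt x)%R.
  by rewrite -(sqrt_pow2 _ c0); apply: sqrt_le_1_alt; lra.
have r_ge := sqrt_x_ge x_large; have x0 := x_gt0 x_large.
have [k [k_gt k_le]] := @exists_nat_between (3 * x / 2000) ltac:(lra).
have [s [s_gt s_le]] := @exists_nat_between (sqrt x / 50 - 1) ltac:(lra).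
case: (@random_graph_exists R m (edge_prob x) 10 k s) => [||e [e_simple deg_lt no_clique indep_lt]].
- by apply/andP; split; apply/RleP; [apply: edge_prob_ge0 | apply: edge_prob_le1].
- by apply/RltP; rewrite -!INRE -!RpowE; apply: expected_bad_lt1.
exists e; split; [exact: e_simple | split; [|split; [exact: no_clique|]]].
- move=> v; have /ssrnat.leP/le_INR := deg_lt v; rewrite S_INR; lra.
- move=> A /indep_lt /ssrnat.ltP/lt_INR; lra.
Qed.
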